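(* Let $L:\mathbb{R}\to\mathbb{R}_{+}$ be a convex loss function with $L(0)=0$. Suppose there is some $\epsilon>0$ such that $L$ is linear (affine) on the interval $(0,2+\epsilon)$. Then $L$ is Fisher consistent for binary classification; that is, for every random pair $(X,Y)$ with $Y\in\{-1,1\}$ and every feature value $\mathbf{x}$, writing $p:=\Pr(Y=1\mid \mathbf{x})$ and $q:=\Pr(Y=-1\mid \mathbf{x})$, \[ \operatorname*{arg\,min}_{z\in\mathbb{R}} \mathbf{E}_{Y\mid \mathbf{x}}\, L(1-Yz)=\operatorname*{arg\,min}_{z\in\mathbb{R}} \big(p\,L(1-z)+q\,L(1+z)\big)= f^{*}_{Bayes}(\mathbf{x}), \] where $f^{*}_{Bayes}(\mathbf{x})=1$ if $p>q$ and $f^{*}_{Bayes}(\mathbf{x})=-1$ if $p<q$.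
   Context: Binary classification setting: features $\mathbf{X}\in\mathcal{X}\subseteq\mathbb{R}^d$ and labels $Y\in\{-1,1\}$. The Bayes classifier is $f^{*}_{Bayes}(\mathbf{x})=1$ if $\Pr(Y=1\mid\mathbf{x})>\Pr(Y=-1\mid\mathbf{x})$ and $f^{*}_{Bayes}(\mathbf{x})=-1$ if $\Pr(Y=1\mid\mathbf{x})<\Pr(Y=-1\mid\mathbf{x})$. A loss function $L$ is called Fisher consistent (classification calibrated) if $\operatorname{arg\,min}_{f:\mathcal{X}\to\mathbb{R}}\mathbf{E}_{X,Y}L(1-Yf(\mathbf{X}))$ is solved by the Bayes classifier; in the binary (SVM) setting this holds when, for all $\mathbf{x}\in\mathcal{X}$, $\operatorname{arg\,min}_{z\in\mathbb{R}}\mathbf{E}_{Y\mid\mathbf{x}}L(1-Yz)=f^{*}_{Bayes}(\mathbf{x})$, which is the condition stated in the claim. *)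

From mathcomp Require Import all_boot all_order all_algebra.
From mathcomp Require Import reals.
Set Implicit Arguments. Unset Strict Implicit. Unset Printing Implicit Defensive.
Import Order.TTheory GRing.Theory Num.Theory.
Local Open Scope ring_scope.

Definition convex_loss (R : realType) (L : R -> R) : Prop :=
  forall (x y t : R), 0 <= t <= 1 ->
    L (t * x + (1 - t) * y) <= t * L x + (1 - t) * L y.

Definition affine_on (R : realType) (L : R -> R) (a b : R) : Prop :=
  exists c d : R, forall t : R, a < t < b -> L t = c * t + d.

Definition cond_risk (R : realType) (L : R -> R) (p q z : R) : R :=
  p * L (1 - z) + q * L (1 + z).

(* Bayes classifier value: 1 if p > q, -1 if p < q (only used when p != q). *)
Definition f_bayes (R : realType) (p q : R) : R := if q < p then 1 else -1.

Definition is_argmin (R : realType) (g : R -> R) (z0 : R) : Prop :=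
  forall z : R, g z0 <= g z.

From mathcomp Require Import all_boot all_order all_algebra.
From mathcomp Require Import reals.
From mathcomp Require Import ring lra.
Import Order.TTheory GRing.Theory Num.Theory.
Local Open Scope ring_scope.

(* Convexity and [L 0 = 0] make [L t / t] nondecreasing on (0, +oo), and
   nonnegativity forces the affine piece of [L] to pass through the origin,
   so [L t = L 1 * t] on [0, 2].  Hence the line [t |-> L 1 * t] minorizes
   [L] everywhere and is attained at [0] and [2].  For [p > q] the risk at
   [z = 1] is [2 q L 1]; for [z <= 1] the minorant bounds the risk below by
   [L 1 * (1 - (p - q) z) >= 2 q L 1], and for [z >= 1] the term
   [q L (1 + z) >= q (1 + z) L 1] alone suffices. *)

Lemma affine_ge0_at_left_end (R : realFieldType) (b c d : R) :
  0 < b -> (forall t, 0 < t < b -> 0 <= c * t + d) -> 0 <= d.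
Proof.
move=> b_gt0 ge0; rewrite leNgt; apply/negP => d_lt0.
have ge0_mid : 0 <= c * (b / 2) + d by apply: ge0; lra.
have c_gt0 : 0 < c by nra.
(* the affine function takes the negative value [d / 2] at [t] *)
set t := - d / (2 * c).
have ct : c * t = - d / 2 by rewrite /t; field; rewrite gt_eqF.
have t_gt0 : 0 < t by rewrite divr_gt0 ?mulr_gt0 // oppr_gt0.
have t_ltb : t < b.
  by rewrite ltr_pdivrMr ?mulr_gt0 //; have := mulr_gt0 c_gt0 b_gt0; lra.
have : 0 <= c * t + d by apply: ge0; rewrite t_gt0 t_ltb.
lra.
Qed.

Section ConvexLossFromOrigin.

Context {R : realType} {L : R -> R}.
Hypotheses (L_ge0 : forall t, 0 <= L t) (L_convex : convex_loss L) (L0 : L 0 = 0).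

Lemma convex_slope_origin_le {s t : R} : 0 < s <= t -> t * L s <= s * L t.
Proof.
case/andP=> s_gt0 le_st; have t_gt0 := lt_le_trans s_gt0 le_st.
have unit_st : 0 <= s / t <= 1.
  by rewrite divr_ge0 ?ler_pdivrMr ?mul1r // ltW.
have := L_convex t 0 (s / t) unit_st.
rewrite mulr0 addr0 L0 mulr0 addr0 divfK ?gt_eqF //.
move=> le_Ls; suff -> : s * L t = t * (s / t * L t) by rewrite ler_wpM2l // ltW.
by field; rewrite gt_eqF.
Qed.

Lemma affine_on_origin_linear {b : R} : 1 < b -> affine_on L 0 b ->
  forall t, 0 <= t < b -> L t = L 1 * t.
Proof.
move=> b_gt1 [c [d Lcd]].
have b_gt0 : 0 < b by lra.
have d_ge0 : 0 <= d.
  by apply: (@affine_ge0_at_left_end _ b c) => // t /Lcd <-.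
have d_le0 : d <= 0.
  have quarter_half : 0 < b / 4 <= b / 2 by apply/andP; split; lra.
  have := convex_slope_origin_le quarter_half.
  rewrite !Lcd; [nra | lra | lra].
have L1 : L 1 = c by rewrite Lcd; lra.
move=> t /andP[t_ge0 t_ltb]; rewrite L1.
have [->|t_neq0] := eqVneq t 0; first by rewrite L0 mulr0.
rewrite Lcd; lra.
Qed.

Lemma linear_minorant {b : R} : 1 < b -> affine_on L 0 b ->
  forall t, L 1 * t <= L t.
Proof.
move=> b_gt1 affL t; have lin := affine_on_origin_linear b_gt1 affL.
have L1_ge0 := L_ge0 1.
have [t_le0|t_gt0] := leP t 0.
  by apply: le_trans (L_ge0 t); rewrite mulr_ge0_le0.
have [t_le1|t_gt1] := leP t 1; first by rewrite (lin t) //; apply/andP; split; lra.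
by rewrite mulrC -[L t]mul1r convex_slope_origin_le //; lra.
Qed.

End ConvexLossFromOrigin.

Lemma cond_risk_min_at1 {R : realType} {L : R -> R} :
  (forall t, 0 <= L t) -> L 0 = 0 -> L 2 = L 1 * 2 ->
  (forall t, L 1 * t <= L t) ->
  forall p q, 0 <= q -> p + q = 1 -> q < p -> is_argmin (cond_risk L p q) 1.
Proof.
move=> L_ge0 L0 L2 minor p q q_ge0 pq q_lt_p z.
rewrite /cond_risk subrr L0 mulr0 add0r (_ : 1 + 1 = 2) // L2.
have L1_ge0 := L_ge0 1.
have [z_le1|z_gt1] := leP z 1.
  have p_ge0 : 0 <= p by lra.
  have := minor (1 + z) => /(ler_wpM2l q_ge0) m1.
  have := minor (1 - z) => /(ler_wpM2l p_ge0) m2.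
  have gap : 0 <= L 1 * ((p - q) * (1 - z)) by rewrite !mulr_ge0 //; lra.
  nra.
have := minor (1 + z) => /(ler_wpM2l q_ge0) m1.
have p_term_ge0 : 0 <= p * L (1 - z) by rewrite mulr_ge0 // ltW // (le_lt_trans q_ge0).
have gap : 0 <= q * (L 1 * (z - 1)) by rewrite !mulr_ge0 //; lra.
nra.
Qed.

Lemma cond_risk_swap {R : realType} (L : R -> R) (p q z : R) :
  cond_risk L p q z = cond_risk L q p (- z).
Proof. by rewrite /cond_risk !opprK addrC. Qed.

Theorem theorem1 (R : realType) (L : R -> R)
  (HLnn : forall t : R, 0 <= L t)
  (Hconv : convex_loss L)
  (HL0 : L 0 = 0)
  (Hlin : exists eps : R, 0 < eps /\ affine_on L 0 (2 + eps)) :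
  forall p q : R, 0 <= p -> 0 <= q -> p + q = 1 -> p != q ->
    is_argmin (cond_risk L p q) (f_bayes p q).
Proof.
move=> p q p_ge0 q_ge0 pq p_neq_q.
have [eps [eps_gt0 affL]] := Hlin.
have b_gt1 : 1 < 2 + eps by lra.
have L2 : L 2 = L 1 * 2.
  by apply: (affine_on_origin_linear HLnn Hconv HL0 b_gt1 affL); lra.
have minor := linear_minorant HLnn Hconv HL0 b_gt1 affL.
have min_at1 := cond_risk_min_at1 HLnn HL0 L2 minor.
rewrite /f_bayes; case: ltP => [q_lt_p|p_le_q] z; first exact: min_at1.
have p_lt_q : p < q by rewrite lt_neqAle p_neq_q p_le_q.
by rewrite !(cond_risk_swap L p q) opprK min_at1 // addrC.
Qed.
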